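(* Let $\rho\in(0,1)$ and let $(\gamma_{n})_{n\in\mathbb{N}}$ be nonnegative integrable functions on $[0,\infty)$ with $\int_{0}^{\infty}\gamma_{n}(t)dt\le\rho$ for all $n$. For $\theta\le\rho-1-\log\rho$ let $x(\theta)$ be the minimal real solution of $x=\theta+(e^{x}-1)\rho$. For a measurable function $t\mapsto f(t,\theta)$ on $[0,\infty)$ define $$F_{n}(t,\theta):=\theta+\int_{0}^{t}\left(e^{f(t-s,\theta)}-1\right)\gamma_{n}(s)\,ds,\qquad t\ge0.$$ (a) If $0\le\theta\le\rho-1-\log\rho$ and $f(t,\theta)\le x(\theta)$ for all $t\ge0$, then $F_{n}(t,\theta)\le x(\theta)$ for all $t\ge0$ and $n\in\mathbb{N}$. (b) If $\theta\le0$ and $f(t,\theta)\ge x(\theta)$ for all $t\ge0$, then $F_{n}(t,\theta)\ge x(\theta)$ for all $t\ge0$ and $n\in\mathbb{N}$. *)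

From HB Require Import structures.
From mathcomp Require Import all_boot all_order all_algebra.
From mathcomp Require Import all_classical all_reals all_analysis.
Set Implicit Arguments. Unset Strict Implicit. Unset Printing Implicit Defensive.
Import Order.TTheory GRing.Theory Num.Theory.
Local Open Scope ring_scope.

Definition min_solution (R : realType) (rho theta x : R) : Prop :=
  x = theta + (expR x - 1) * rho /\
  forall y : R, y = theta + (expR y - 1) * rho -> x <= y.

Definition Fn (R : realType) (theta : R) (f : R -> R) (gamma : R -> R) (t : R)
  : \bar R :=
  (theta%:E + \int[lebesgue_measure]_(s in `[0%R, t]%classic)
                 ((expR (f (t - s)) - 1) * gamma s)%:E)%E.

(** Proof: in [F_n] the factor [e^f - 1] is at most [e^x - 1 >= 0] in case (a)
    and at least [-(1 - e^x)] with [1 - e^x >= 0] in case (b).  As [gamma_n >= 0]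
    has mass at most [rho], this gives [F_n <= theta + (e^x - 1) rho] in case (a)
    and [F_n >= theta - (1 - e^x) rho] in case (b), and both bounds equal [x].
    The signs of [x] come from the fixed-point equation: [x >= 0] when
    [theta >= 0] because [rho < 1], and [x <= 0] when [theta <= 0] because the
    equation then has a root in [[theta - rho, 0]] and [x] is the least one. *)

From HB Require Import structures.
From mathcomp Require Import all_boot all_order all_algebra.
From mathcomp Require Import all_classical all_reals all_analysis.
From mathcomp Require Import measurable_realfun ring lra.
Import Order.TTheory GRing.Theory Num.Theory.
Import numFieldNormedType.Exports.
Local Open Scope ring_scope.

Section integral_bounds.
Local Open Scope ereal_scope.
Context {d : measure_display} {T : measurableType d} {R : realType}.
Variable mu : {measure set T -> \bar R}.

(* No measurability is needed: the nonnegative integral is a supremum over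
   simple functions below the integrand. *)
Lemma ge0_le_integral_subset (A B : set T) (f g : T -> \bar R) :
  (forall x, A x -> 0 <= f x) -> (forall x, B x -> 0 <= g x) ->
  (forall x, A x -> B x /\ f x <= g x) ->
  \int[mu]_(x in A) f x <= \int[mu]_(x in B) g x.
Proof.
move=> f0 g0 fg; rewrite (ge0_integralE _ f0) (ge0_integralE _ g0).
apply: ge_ereal_sup => _ [h /= hf <-]; apply: ereal_sup_ubound; exists h => //= x.
apply: le_trans (hf x) _; rewrite /patch.
case: ifPn => [/set_mem Ax|_]; last by case: ifPn => // /set_mem; exact: g0.
by have [Bx fgx] := fg _ Ax; rewrite mem_set.
Qed.

Lemma integral_le_funepos (D : set T) (f : T -> \bar R) :
  \int[mu]_(x in D) f x <= \int[mu]_(x in D) f^\+ x.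
Proof.
rewrite integralE; apply: geeDl; rewrite oppe_le0.
by apply: integral_ge0 => x _; exact: funeneg_ge0.
Qed.

Lemma integral_ge_oppfuneneg (D : set T) (f : T -> \bar R) :
  - (\int[mu]_(x in D) f^\- x) <= \int[mu]_(x in D) f x.
Proof.
rewrite [in X in _ <= X]integralE -[X in X <= _]add0e; apply: leeD2r.
by apply: integral_ge0 => x _; exact: funepos_ge0.
Qed.

Context {B : set T} {g : T -> R}.
Hypotheses (mB : measurable B) (g_ge0 : forall x, B x -> (0 <= g x)%R).
Hypothesis mg : measurable_fun B (EFin \o g).

Let integralZl_g (c : R) : (0 <= c)%R ->
  \int[mu]_(x in B) (c * g x)%:E = c%:E * \int[mu]_(x in B) (g x)%:E.
Proof.
move=> c0; under eq_integral do rewrite EFinM.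
by apply: ge0_integralZl_EFin => // x /g_ge0; rewrite lee_fin.
Qed.

Lemma integral_mul_le (D : set T) (u : T -> R) (c : R) :
  (D `<=` B)%classic -> (0 <= c)%R -> (forall x, D x -> u x <= c)%R ->
  \int[mu]_(x in D) (u x * g x)%:E <= c%:E * \int[mu]_(x in B) (g x)%:E.
Proof.
move=> DB c0 uc; apply: le_trans (integral_le_funepos _ _) _.
rewrite -integralZl_g //; apply: ge0_le_integral_subset.
- by move=> x _; exact: funepos_ge0.
- by move=> x /g_ge0 gx; rewrite lee_fin mulr_ge0.
- move=> x Dx; split; first exact: DB.
  have gx := g_ge0 _ (DB _ Dx).
  by rewrite funeposE ge_max !lee_fin mulr_ge0 // andbT ler_wpM2r ?uc.
Qed.

Lemma integral_mul_ge (D : set T) (u : T -> R) (c : R) :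
  (D `<=` B)%classic -> (0 <= c)%R -> (forall x, D x -> - c <= u x)%R ->
  - (c%:E * \int[mu]_(x in B) (g x)%:E) <= \int[mu]_(x in D) (u x * g x)%:E.
Proof.
move=> DB c0 uc; apply: le_trans (integral_ge_oppfuneneg _ _); rewrite leeN2.
rewrite -integralZl_g //; apply: ge0_le_integral_subset.
- by move=> x _; exact: funeneg_ge0.
- by move=> x /g_ge0 gx; rewrite lee_fin mulr_ge0.
- move=> x Dx; split; first exact: DB.
  have gx := g_ge0 _ (DB _ Dx).
  rewrite funenegE ge_max -EFinN !lee_fin mulr_ge0 // andbT -mulNr.
  by rewrite ler_wpM2r // lerNl uc.
Qed.

End integral_bounds.

Section min_solution_sign.
Context {R : realType}.

Lemma exp_fixpoint_ge0 {rho theta x : R} :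
  0 <= rho < 1 -> 0 <= theta -> x = theta + (expR x - 1) * rho -> 0 <= x.
Proof.
move=> /andP[rho_ge0 rho_lt1] theta_ge0 x_eq.
by have := expR_ge1Dx x; nra.
Qed.

Lemma min_solution_le0 {rho theta x : R} :
  0 < rho -> theta <= 0 -> min_solution rho theta x -> x <= 0.
Proof.
move=> rho_gt0 theta_le0 [_ x_min].
pose h y := theta + (expR y - 1) * rho - y.
have h_cont : continuous h.
  move=> y; apply: cvgB; last exact: cvg_id.
  apply: cvgD; first exact: cvg_cst.
  apply: cvgM; last exact: cvg_cst.
  by apply: cvgB; [exact: continuous_expR | exact: cvg_cst].
have h_left : 0 < h (theta - rho).
  by rewrite /h; have := expR_gt0 (theta - rho); nra.
have h_right : h 0 = theta by rewrite /h expR0 subrr mul0r addr0 subr0.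
have [c] : exists2 c, c \in `[theta - rho, 0] & h c = 0.
  apply: IVT; [lra | exact: continuous_subspaceT |].
  rewrite h_right ge_min le_max.
  by apply/andP; split; apply/orP; [right | left]; lra.
rewrite in_itv /= => /andP[_ c_le0] hc.
by apply: le_trans (x_min c _) c_le0; rewrite /h in hc; lra.
Qed.

End min_solution_sign.

Section Fn_bounds.
Local Open Scope ereal_scope.
Context {R : realType} {rho theta : R} {f gamma : R -> R}.
Hypothesis gamma_ge0 : forall t, (0 <= t)%R -> (0 <= gamma t)%R.
Hypothesis gamma_int :
  lebesgue_measure.-integrable `[0%R, +oo[%classic (fun t => (gamma t)%:E).
Hypothesis gamma_mass :
  \int[lebesgue_measure]_(t in `[0%R, +oo[%classic) (gamma t)%:E <= rho%:E.

Let itv0t_sub (t : R) : (`[0%R, t] `<=` `[0%R, +oo[)%classic.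
Proof. by move=> s /=; rewrite !in_itv /= => /andP[-> _]. Qed.

Let gamma_ge0_itv s : `[0%R, +oo[%classic s -> (0 <= gamma s)%R.
Proof. by rewrite /= in_itv /= andbT; exact: gamma_ge0. Qed.

Let itv0t_ge0 (t s : R) : `[0%R, t]%classic s -> (0 <= t - s)%R.
Proof. by rewrite /= in_itv /= => /andP[_]; rewrite subr_ge0. Qed.

Lemma Fn_le (c t : R) : (0 <= c)%R ->
  (forall s, 0 <= s -> expR (f s) - 1 <= c)%R ->
  Fn theta f gamma t <= (theta + c * rho)%:E.
Proof.
move=> c0 fc; rewrite /Fn EFinD; apply: leeD2l.
have fc_itv s : `[0%R, t]%classic s -> (expR (f (t - s)) - 1 <= c)%R.
  by move/itv0t_ge0; exact: fc.
apply: le_trans (integral_mul_le lebesgue_measure (measurable_itv _) gamma_ge0_itv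
  (measurable_int _ gamma_int) _ _ _ (itv0t_sub t) c0 fc_itv) _.
by rewrite EFinM; apply: lee_wpmul2l gamma_mass; rewrite lee_fin.
Qed.

Lemma Fn_ge (c t : R) : (0 <= c)%R ->
  (forall s, 0 <= s -> - c <= expR (f s) - 1)%R ->
  (theta - c * rho)%:E <= Fn theta f gamma t.
Proof.
move=> c0 fc; rewrite /Fn EFinB; apply: leeD2l.
have fc_itv s : `[0%R, t]%classic s -> (- c <= expR (f (t - s)) - 1)%R.
  by move/itv0t_ge0; exact: fc.
apply: le_trans (integral_mul_ge lebesgue_measure (measurable_itv _) gamma_ge0_itv
  (measurable_int _ gamma_int) _ _ _ (itv0t_sub t) c0 fc_itv).
by rewrite EFinM leeN2; apply: lee_wpmul2l gamma_mass; rewrite lee_fin.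
Qed.

End Fn_bounds.

Theorem lemma4p6 (R : realType) (rho : R) (gamma : nat -> R -> R)
  (theta : R) (f : R -> R) (x : R) :
  0 < rho < 1 ->
  (forall n t, 0 <= t -> 0 <= gamma n t) ->
  (forall n, lebesgue_measure.-integrable `[0%R, +oo[%classic
               (fun t => (gamma n t)%:E)) ->
  (forall n, (\int[lebesgue_measure]_(t in `[0%R, +oo[%classic)
               (gamma n t)%:E <= rho%:E)%E) ->
  theta <= rho - 1 - ln rho ->
  min_solution rho theta x ->
  measurable_fun (`[0%R, +oo[%classic : set R) f ->
  ((0 <= theta -> (forall t, 0 <= t -> f t <= x) ->
      forall n t, 0 <= t -> (Fn theta f (gamma n) t <= x%:E)%E)
   /\
   (theta <= 0 -> (forall t, 0 <= t -> x <= f t) ->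
      forall n t, 0 <= t -> (x%:E <= Fn theta f (gamma n) t)%E)).
Proof.
(* The bound on [theta] only guarantees that [x] exists, and [f] need not be
   measurable since the integrals are bounded through their positive and
   negative parts. *)
move=> /andP[rho_gt0 rho_lt1] gamma_ge0 gamma_int gamma_mass _ x_sol _.
have x_eq := x_sol.1; split.
- move=> theta_ge0 f_le n t _.
  have x_ge0 : 0 <= x.
    by apply: exp_fixpoint_ge0 theta_ge0 x_eq; rewrite (ltW rho_gt0).
  rewrite x_eq; apply: (Fn_le (gamma_ge0 n) (gamma_int n) (gamma_mass n)).
    by rewrite subr_ge0 -expR0 ler_expR.
  by move=> s /f_le; rewrite lerD2r ler_expR.
- move=> theta_le0 f_ge n t _.
  have x_le0 : x <= 0 by exact: min_solution_le0 rho_gt0 theta_le0 x_sol.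
  have -> : x = theta - (1 - expR x) * rho by rewrite {1}x_eq; ring.
  apply: (Fn_ge (gamma_ge0 n) (gamma_int n) (gamma_mass n)).
    by rewrite subr_ge0 expR_le1.
  by move=> s /f_ge; rewrite opprB lerD2r ler_expR.
Qed.
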